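(* For any cyclic CFSM protocol $\mathbf P$ with communication graph $(N,E)$ the following four conditions are equivalent: (a) $\mathbf P$ has the recognizable channel property; (b) $\mathbf P$ has the rational channel property; (c) for every $\beta\in E$ and every composite state $S$, the set $Q_\beta(S)=\{x_\beta\in M_\beta^*: (x_\xi:\xi\in E)\in\mathbf L(S)\text{ and } x_\xi=\lambda \text{ for } \xi\neq\beta\}$ is regular; (d) there exists $\beta\in E$ such that $Q_\beta(S)$ is regular for every composite state $S$.
   Context: A CFSM protocol $\mathbf P$ has a finite directed communication graph $G=(N,E)$ (edge $\xi$ has tail $-\xi$, head $+\xi$), pairwise disjoint finite message sets $M_\xi$ ($\xi\in E$), and for each $j\in N$ a finite state machine $F_j=(K_j,\Sigma_j,T_j,h_j)$: finite state set $K_j$, initial state $h_j$, alphabet $\Sigma_j=\{+b: b\in M_\xi,\ j=+\xi\}\cup\{-b: b\in M_\xi,\ j=-\xi\}$, transitions $T_j\subseteq K_j\times\Sigma_j\times K_j$ ($+b$ = receive, $-b$ = send). A composite state is $S=(p_j:j\in N)$, $p_j\in K_j$; a channel content is $C=(x_\xi:\xi\in E)$, $x_\xi\in M_\xi^*$; global states are pairs $(S,C)$; $C^0$ has all components equal to the empty word $\lambda$; the initial global state is $(S^0,C^0)$, $S^0=(h_j:j\in N)$. A step: some machine $F_i$ takes $p_i\xrightarrow{-b}q_i$ with $b\in M_\beta$, $i=-\beta$, appending $b$ to the end of $x_\beta$; or takes $p_i\xrightarrow{+b}q_i$ with $b\in M_\beta$, $i=+\beta$, provided $x_\beta$ begins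 with $b$, removing it; everything else unchanged. $\vdash^*$ denotes reachability by finitely many steps. $\mathbf L(S)=\{C: (S^0,C^0)\vdash^*(S,C)\}\subseteq\prod_{\xi\in E}M_\xi^*$. A subset of the monoid $\prod_{\xi\in E}M_\xi^*$ (componentwise concatenation) is rational if it belongs to the smallest family containing the finite sets and closed under union, product and Kleene star; it is recognizable if it is a finite union of sets $\prod_{\xi\in E}L_\xi$ with each $L_\xi\subseteq M_\xi^*$ a regular language. $\mathbf P$ has the rational (resp. recognizable) channel property if $\mathbf L(S)$ is rational (resp. recognizable) for every composite state $S$. $\mathbf P$ is cyclic if $G$ is a directed cycle. *)

From mathcomp Require Import all_boot.
Set Implicit Arguments. Unset Strict Implicit. Unset Printing Implicit Defensive.

(* Letters of the machines: [Snd e b] is "-b" (send b on channel e),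
   [Rcv e b] is "+b" (receive b from channel e), with b : M e. *)
Inductive action (E : Type) (M : E -> Type) : Type :=
  | Snd (e : E) (b : M e)
  | Rcv (e : E) (b : M e).

Definition in_alphabet (N E : eqType) (tl hd : E -> N) (M : E -> Type)
  (j : N) (a : action M) : bool :=
  match a with
  | Snd e _ => tl e == j
  | Rcv e _ => hd e == j
  end.

(* A CFSM protocol. Message sets are disjoint by construction (dependent
   family msg indexed by the edges). *)
Record cfsm := Cfsm {
  node : finType;
  edge : finType;
  tl : edge -> node;
  hd : edge -> node;
  msg : edge -> finType;
  st : node -> finType;
  init : forall j, st j;
  trans : forall j, st j -> action msg -> st j -> bool;
  trans_wf : forall j p a q, @trans j p a q -> in_alphabet tl hd j a
}.

Definition cstate (P : cfsm) := forall j : node P, st j.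
Definition chan (P : cfsm) := forall e : edge P, seq (msg e).
Definition chan0 (P : cfsm) : chan P := fun e => [::].
Definition init_state (P : cfsm) : cstate P := fun j => init j.

Definition step (P : cfsm) (S : cstate P) (C : chan P)
    (S' : cstate P) (C' : chan P) : Prop :=
  exists (i : node P) (q : st i),
    S' i = q /\ (forall j, j != i -> S' j = S j) /\
    exists (e : edge P) (b : msg e),
      (forall xi, xi != e -> C' xi = C xi) /\
      ( (tl e = i /\ trans (S i) (@Snd _ (fun x => msg x) e b) q /\ C' e = rcons (C e) b)
     \/ (hd e = i /\ trans (S i) (@Rcv _ (fun x => msg x) e b) q /\ C e = b :: C' e) ).

Inductive reach (P : cfsm) : cstate P -> chan P -> Prop :=
  | reach0 : @reach P (@init_state P) (@chan0 P)
  | reachS S C S' C' : @reach P S C -> step S C S' C' -> @reach P S' C'.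

Definition Lang (P : cfsm) (S : cstate P) : chan P -> Prop :=
  fun C => reach S C.

Definition mcat (E : Type) (M : E -> Type) (C1 C2 : forall e, seq (M e))
  : forall e, seq (M e) := fun e => C1 e ++ C2 e.
Definition munit (E : Type) (M : E -> Type) : forall e, seq (M e) :=
  fun e => [::].

Inductive mstar (E : Type) (M : E -> Type) (A : (forall e, seq (M e)) -> Prop)
  : (forall e, seq (M e)) -> Prop :=
  | mstar0 : mstar A (munit M)
  | mstarS C1 C2 : A C1 -> mstar A C2 -> mstar A (mcat C1 C2).

(* Rational subsets: smallest family (of sets, i.e. up to set equality)
   containing finite sets and closed under union, product and star. *)
Inductive rational (E : Type) (M : E -> Type)
  : ((forall e, seq (M e)) -> Prop) -> Prop :=
  | rat_fin (s : list (forall e, seq (M e))) :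
      rational (fun C => exists2 i, i < size s & C = nth (munit M) s i)
  | rat_union A B : rational A -> rational B ->
      rational (fun C => A C \/ B C)
  | rat_prod A B : rational A -> rational B ->
      rational (fun C => exists C1 C2, A C1 /\ B C2 /\ C = mcat C1 C2)
  | rat_star A : rational A -> rational (mstar A)
  | rat_ext A B : rational A -> (forall C, A C <-> B C) -> rational B.

Definition regular (A : finType) (L : seq A -> Prop) : Prop :=
  exists (Q : finType) (q0 : Q) (d : Q -> A -> Q) (F : pred Q),
    forall w, L w <-> F (foldl d q0 w).

Definition recognizable (E : Type) (M : E -> finType)
  (A : (forall e, seq (M e)) -> Prop) : Prop :=
  exists (n : nat) (Ls : 'I_n -> forall e, seq (M e) -> Prop),
    (forall i e, regular (Ls i e)) /\
    (forall C, A C <-> exists i, forall e, Ls i e (C e)).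

Definition rational_channel_property (P : cfsm) : Prop :=
  forall S : cstate P, rational (@Lang P S).

Definition recognizable_channel_property (P : cfsm) : Prop :=
  forall S : cstate P, recognizable (@Lang P S).

Definition Qset (P : cfsm) (beta : edge P) (S : cstate P) : seq (msg beta) -> Prop :=
  fun x => exists C : chan P, Lang S C /\ C beta = x /\
             (forall xi, xi != beta -> C xi = [::]).

Definition cyclic (P : cfsm) : Prop :=
  exists (k : nat) (v : 'I_k.+1 -> node P) (w : 'I_k.+1 -> edge P),
    bijective v /\ bijective w /\
    forall i, tl (w i) = v i /\ hd (w i) = v (ordS i).

From mathcomp Require Import all_boot.
From mathcomp Require Import boolp.
From mathcomp Require Import zify.
Set Implicit Arguments. Unset Strict Implicit. Unset Printing Implicit Defensive.

(* Recognizable sets are rational because a regular language placed on a single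
   channel is rational (McNaughton-Yamada).  The slice of a rational set along one
   channel, the other channels being empty, has finitely many residuals, since
   this property survives finite sets, union, product and star; hence it is
   regular.

   Conversely, let [Q_beta(S)] be regular for all [S] and let [m 0], ..., [m k]
   enumerate the cycle so that [beta] goes from [m k] to [m 0].  Every reachable
   configuration [(S, C)] decomposes: some pivot configuration [(p, c)], where only
   [beta] is nonempty and [c] lies in [Q_beta(p)], is reachable, and from [p] each
   machine other than [m k] performs a local run to [S] so that, around the cycle,
   what [m t] sends is what [m t.+1] receives followed by the content of the channel
   between them.  The decomposition survives every step (a receive by [m k] moves
   the pivot forward), and a decomposed configuration is reached by letting
   [m 0], ..., [m k] run in turn.  Unfolded machine by machine, the condition is an
   iterated right quotient of regular languages by the channel contents, so whether
   [C] lies in [L(S)] only depends on finitely many regular classes of each channel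
   content. *)

Lemma catI (T : Type) : right_injective (@cat T).
Proof. by elim=> //= x s IH a b [/IH]. Qed.

Lemma cat_eq_cat (T : Type) (u w w1 w2 : seq T) : u ++ w = w1 ++ w2 ->
  (exists y, w1 = u ++ y /\ w = y ++ w2) \/ (exists x, u = w1 ++ x /\ w2 = x ++ w).
Proof.
elim: u w1 => [|a u IH] [|b w1] /=.
- by move=> ->; left; exists [::].
- by move=> ->; left; exists (b :: w1).
- by move=> <-; right; exists (a :: u).
- by case=> -> /IH [[y [-> ->]]|[x [-> ->]]]; [left; exists y | right; exists x].
Qed.

Lemma map_eq_cat (T U : Type) (f : T -> U) (s : seq T) s1 s2 :
  map f s = s1 ++ s2 -> exists t1 t2, s = t1 ++ t2 /\ map f t1 = s1 /\ map f t2 = s2.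
Proof.
elim: s s1 => [|x s IH] [|y s1] //=.
- by case: s2 => // _; exists [::], [::].
- by move=> <-; exists [::], (x :: s).
- by case=> <- /IH [t1 [t2 [-> [<- <-]]]]; exists (x :: t1), t2.
Qed.

(** * Languages with finitely many residuals *)

Section Residuals.
Variable A : finType.
Implicit Types L : seq A -> Prop.

Definition lang_cat L1 L2 : seq A -> Prop :=
  fun w => exists w1 w2, w = w1 ++ w2 /\ L1 w1 /\ L2 w2.

Inductive kstar L : seq A -> Prop :=
  | kstar0 : kstar L [::]
  | kstarS u v : L u -> kstar L v -> kstar L (u ++ v).

Lemma kstar_cat L u v : kstar L u -> kstar L v -> kstar L (u ++ v).
Proof. by elim=> // x y hx _ IH /IH; rewrite -catA; apply: kstarS. Qed.

Lemma kstar_catP L u w : kstar L (u ++ w) <->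
  (kstar L u /\ kstar L w) \/
  exists v x y z, [/\ u = v ++ x, kstar L v, w = y ++ z, L (x ++ y) & kstar L z].
Proof.
split; last first.
  case=> [[hu hw]|[v [x [y [z [-> hv -> hxy hz]]]]]]; first exact: kstar_cat.
  by rewrite -catA (catA x); apply: kstar_cat => //; apply: kstarS.
move: {-2}(u ++ w) (erefl (u ++ w)) => s es hs; elim: hs u w es => [|k r hk hr IH] u w.
  by case: u => [|? ?] //= <-; left; split; constructor.
move/esym/cat_eq_cat => [[y [ek ew]]|[x [eu er]]].
  by right; exists [::], u, y, r; rewrite -ek; split => //; constructor.
have [[hx hw]|[v [x' [y [z [ex hv ew hxy hz]]]]]] := IH _ _ er.
  by left; split => //; rewrite eu; constructor.
by right; exists (k ++ v), x', y, z; rewrite eu ex catA; split => //; constructor.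
Qed.

(* The residual u^-1 L = {w | L (u ++ w)} only depends on [g u], so [L] has
   finitely many residuals: by Myhill-Nerode this characterises regularity. *)
Definition fin_residuals L :=
  exists (T : finType) (g : seq A -> T) (h : T -> seq A -> Prop),
    forall u w, L (u ++ w) <-> h (g u) w.

Lemma fin_residuals_regular L : fin_residuals L -> regular L.
Proof.
move=> [T [g [h H]]].
have residual_g x y : g x = g y -> forall w, L (x ++ w) <-> L (y ++ w).
  by move=> e w; rewrite !H e.
pose rep (t : T) : option (seq A) :=
  if pselect (exists u, g u = t) is left ex then Some (sval (cid ex)) else None.
have repP u : exists u', rep (g u) = Some u' /\ g u' = g u.
  rewrite /rep; case: pselect => [ex|[]]; last by exists u.
  by case: cid => /= u' e; exists u'.
pose d t a := if rep t is Some u then g (rcons u a) else t.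
pose F t := if rep t is Some u then `[< L u >] else false.
have run_rep u : exists u', foldl d (g [::]) u = g u' /\
    forall w, L (u ++ w) <-> L (u' ++ w).
  elim/last_ind: u => [|u a [u' [e1 e2]]]; first by exists [::].
  have [u'' [e3 e4]] := repP u'.
  exists (rcons u'' a); rewrite foldl_rcons e1 /d e3; split => // w.
  by rewrite !cat_rcons e2; apply: residual_g.
exists T, (g [::]), d, F => u.
have [u' [e1 e2]] := run_rep u; have [u'' [e3 e4]] := repP u'.
have := residual_g _ _ e4 [::]; have := e2 [::]; rewrite !cats0 e1 /F e3 => -> <-.
exact: rwP (asboolP _).
Qed.

Lemma fin_residuals_ext L L' : (forall w, L w <-> L' w) -> fin_residuals L -> fin_residuals L'.
Proof. by move=> e [T [g [h H]]]; exists T, g, h => u w; rewrite -e. Qed.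

Lemma fin_residuals0 : fin_residuals (fun _ => False).
Proof. by exists unit, (fun _ => tt), (fun _ _ => False). Qed.

Lemma fin_residuals1 v : fin_residuals (eq^~ v).
Proof.
exists (option 'I_(size v).+1).
exists (fun u => if prefix u v then Some (inord (size u)) else None).
exists (fun (t : option 'I_(size v).+1) w => if t is Some i then w = drop i v else False).
move=> u w; case: ifP => [/prefixP [v' ->]|Hp].
  rewrite inordK ?ltnS ?size_cat ?leq_addr // drop_size_cat //.
  by split => [/catI|->].
by split => // e; move: Hp; rewrite -e prefix_prefix.
Qed.

Lemma fin_residualsU L1 L2 :
  fin_residuals L1 -> fin_residuals L2 -> fin_residuals (fun w => L1 w \/ L2 w).
Proof.
move=> [T1 [g1 [h1 H1]]] [T2 [g2 [h2 H2]]].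
exists (T1 * T2)%type, (fun u => (g1 u, g2 u)), (fun t w => h1 t.1 w \/ h2 t.2 w).
by move=> u w /=; rewrite H1 H2.
Qed.

Lemma fin_residuals_finite (I : eqType) (s : seq I) (Pr : I -> Prop) (f : I -> seq A) :
  fin_residuals (fun x => exists2 i, i \in s & Pr i /\ x = f i).
Proof.
elim: s => [|a s IH].
  by apply: fin_residuals_ext fin_residuals0 => w; split => // -[].
have [pa|npa] := pselect (Pr a); last first.
  apply: fin_residuals_ext IH => w; split=> -[i hi [pi ->]]; exists i => //.
    by rewrite inE hi orbT.
  by move: hi; rewrite inE => /predU1P [ea|//]; case: npa; rewrite -ea.
apply: fin_residuals_ext (fin_residualsU (fin_residuals1 (f a)) IH) => w; split.
- by case=> [->|[i hi [pi ->]]]; [exists a | exists i]; rewrite ?inE ?eqxx ?hi ?orbT.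
- by case=> i /predU1P [->|hi] [pi ->]; [left | right; exists i].
Qed.

Lemma fin_residuals_cat L1 L2 :
  fin_residuals L1 -> fin_residuals L2 -> fin_residuals (lang_cat L1 L2).
Proof.
move=> [T1 [g1 [h1 H1]]] [T2 [g2 [h2 H2]]].
exists (T1 * {ffun T2 -> bool})%type.
exists (fun u => (g1 u, [ffun t => `[< exists v x, [/\ u = v ++ x, L1 v & g2 x = t] >]])).
exists (fun (t : T1 * {ffun T2 -> bool}) w => (exists y z, [/\ w = y ++ z, h1 t.1 y & L2 z]) \/
                   (exists t2, t.2 t2 /\ h2 t2 w)).
move=> u w /=; split.
- move=> [w1 [w2 [/cat_eq_cat [[y [-> ->]]|[x [-> ->]]] [l1 l2]]]].
    by left; exists y, w2; split => //; apply/H1.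
  right; exists (g2 x); rewrite ffunE -H2; split => //.
  by apply/asboolP; exists w1, x.
- case=> [[y [z [-> hy hz]]]|[t2 []]].
    by exists (u ++ y), z; rewrite catA; do !split => //; apply/H1.
  rewrite ffunE => /asboolP [v [x [-> lv <-]]] /H2 hx.
  by exists v, (x ++ w); rewrite catA.
Qed.

Lemma fin_residuals_star L : fin_residuals L -> fin_residuals (kstar L).
Proof.
move=> [T1 [g1 [h1 H1]]].
exists (bool * {ffun T1 -> bool})%type.
exists (fun u => (`[< kstar L u >],
   [ffun t => `[< exists v x, [/\ u = v ++ x, kstar L v & g1 x = t] >]])).
exists (fun (t : bool * {ffun T1 -> bool}) w => (t.1 /\ kstar L w) \/
   exists t1, t.2 t1 /\ exists y z, [/\ w = y ++ z, h1 t1 y & kstar L z]).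
move=> u w /=; rewrite kstar_catP; split.
- case=> [[hu hw]|[v [x [y [z [eu hv ew hxy hz]]]]]].
    by left; split => //; apply/asboolP.
  right; exists (g1 x); rewrite ffunE; split; first by apply/asboolP; exists v, x.
  by exists y, z; split => //; apply/H1.
- case=> [[/asboolP hu hw]|[t1 []]]; first by left.
  rewrite ffunE => /asboolP [v [x [eu hv <-]]] [y [z [ew hy hz]]].
  by right; exists v, x, y, z; split => //; apply/H1.
Qed.

Lemma regular_ext L L' : (forall w, L w <-> L' w) -> regular L -> regular L'.
Proof. by move=> e [Q [q0 [d [F H]]]]; exists Q, q0, d, F => w; rewrite -e. Qed.

Lemma regular_const (Pr : Prop) : regular (fun _ : seq A => Pr).
Proof.
exists unit, tt, (fun _ _ => tt), (fun _ => `[< Pr >]) => w.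
exact: rwP (asboolP _).
Qed.

Lemma regularI L1 L2 : regular L1 -> regular L2 -> regular (fun w => L1 w /\ L2 w).
Proof.
move=> [Q1 [q1 [d1 [F1 H1]]]] [Q2 [q2 [d2 [F2 H2]]]].
pose d (q : Q1 * Q2) a := (d1 q.1 a, d2 q.2 a).
have foldl_d w x1 x2 : foldl d (x1, x2) w = (foldl d1 x1 w, foldl d2 x2 w).
  by elim: w x1 x2 => //= a w IH x1 x2; rewrite IH.
exists (Q1 * Q2)%type, (q1, q2), d, (fun q => F1 q.1 && F2 q.2) => w.
by rewrite foldl_d H1 H2 /=; split => [[-> ->]|/andP].
Qed.

Lemma regular_preim_map (B : finType) (f : B -> A) L :
  regular L -> regular (fun w => L (map f w)).
Proof.
move=> [Q [q0 [d [F H]]]]; exists Q, q0, (fun q b => d q (f b)), F => w.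
by rewrite H; elim: w {H} q0 => //= b w IH q; rewrite IH.
Qed.

Definition rquo L (x : seq A) : seq A -> Prop := fun r => L (r ++ x).

Definition fin_regular (F : (seq A -> Prop) -> Prop) :=
  exists (T : finType) (R : T -> seq A -> Prop),
    (forall L, F L -> exists t, L = R t) /\ forall t, regular (R t).

Lemma fin_regular_sub F' F : fin_regular F' -> (forall L, F L -> F' L) -> fin_regular F.
Proof. by move=> [T [R [cR rR]]] sF; exists T, R; split => // L /sF /cR. Qed.

Lemma fin_regular_range (I : finType) (R : I -> seq A -> Prop) :
  (forall i, regular (R i)) -> fin_regular (fun L => exists i, L = R i).
Proof. by move=> rR; exists I, R. Qed.

Lemma fin_regular0 : fin_regular (fun _ => False).
Proof. by exists void, (fun _ _ => False); split => [|[]]. Qed.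

Lemma fin_regularU F1 F2 :
  fin_regular F1 -> fin_regular F2 -> fin_regular (fun L => F1 L \/ F2 L).
Proof.
move=> [T1 [R1 [c1 r1]]] [T2 [R2 [c2 r2]]].
exists (T1 + T2)%type, (fun t => match t with inl t1 => R1 t1 | inr t2 => R2 t2 end).
split=> [L [/c1 [t ->]|/c2 [t ->]]|[t|t] //]; [exists (inl t) | exists (inr t)]; by [].
Qed.

Lemma fin_regular_map (I : finType) (V : I -> (seq A -> Prop) -> seq A -> Prop) F :
  (forall i L, regular L -> regular (V i L)) -> fin_regular F ->
  fin_regular (fun L' => exists i L, F L /\ L' = V i L).
Proof.
move=> rV [T [R [cR rR]]]; exists (I * T)%type, (fun it => V it.1 (R it.2)).
split=> [L' [i [L [/cR [t ->] ->]]]|[i t]]; first by exists (i, t).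
exact/rV/rR.
Qed.

Lemma rquo_regular L : regular L ->
  exists (T : finType) (R : T -> seq A -> Prop),
    (forall x, exists t, rquo L x = R t) /\ forall t, regular (R t).
Proof.
move=> [Q [q0 [d [F H]]]].
exists {ffun Q -> bool}, (fun (f : {ffun Q -> bool}) r => f (foldl d q0 r) : Prop).
split; last first.
  by move=> f; exists Q, q0, d, f.
move=> x; exists [ffun q => F (foldl d q x)].
by apply: funext => r; apply: propext; rewrite /rquo H foldl_cat ffunE.
Qed.

Lemma fin_regular_rquo F :
  fin_regular F -> fin_regular (fun L' => exists L x, F L /\ L' = rquo L x).
Proof.
move=> [T [R [cR rR]]].
suff /(_ (enum T)) : forall s : seq T,
    fin_regular (fun L' => exists t x, t \in s /\ L' = rquo (R t) x).
  case=> [T' [R' [c' r']]]; exists T', R'; split => // L' [L [x [/cR [t ->] ->]]].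
  by apply: c'; exists t, x; rewrite mem_enum.
elim=> [|t s [T1 [R1 [c1 r1]]]].
  by apply: (fin_regular_sub fin_regular0) => L' [? [? []]].
have [T0 [R0 [c0 r0]]] := rquo_regular (rR t).
exists (T0 + T1)%type, (fun u => match u with inl u0 => R0 u0 | inr u1 => R1 u1 end).
split=> [L' [t' [x [/predU1P [-> ->|hs ->]]]]|[u|u] //].
  by have [u ->] := c0 x; exists (inl u).
by have [u ->] := c1 _ (ex_intro _ t' (ex_intro _ x (conj hs erefl))); exists (inr u).
Qed.

Lemma fin_regular_classifier F : fin_regular F ->
  exists (T : finType) (g : seq A -> T), (forall t, regular (fun x => g x = t)) /\
    forall x y, g x = g y -> forall L, F L -> rquo L x = rquo L y.
Proof.
move=> [T0 [R [cR rR]]].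
suff /(_ (enum T0)) [T [g [rg hg]]] : forall s : seq T0,
    exists (T : finType) (g : seq A -> T), (forall t, regular (fun x => g x = t)) /\
    forall x y, g x = g y -> forall t0, t0 \in s -> rquo (R t0) x = rquo (R t0) y.
  exists T, g; split => // x y exy L /cR [t0 ->].
  by apply: hg; rewrite ?mem_enum.
elim=> [|t0 s [T [g [rg hg]]]].
  exists unit, (fun _ => tt); split => // -[].
  exact: regular_ext (regular_const True).
have [Q [q0 [d [acc H]]]] := rR t0.
pose cl x := [ffun q => acc (foldl d q x)].
exists ({ffun Q -> bool} * T)%type, (fun x => (cl x, g x)); split.
  move=> [f t]; apply: (@regular_ext (fun x => cl x = f /\ g x = t)).
    by move=> w; split => [[-> ->]|[-> ->]].
  apply: regularI (rg t).
  pose dQ (phi : {ffun Q -> Q}) a := [ffun q => d (phi q) a].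
  have foldl_dQ w phi : foldl dQ phi w = [ffun q => foldl d (phi q) w].
    elim: w phi => [|a w IHw] phi /=; first by apply/ffunP => q; rewrite ffunE.
    by rewrite IHw; apply/ffunP => q; rewrite !ffunE.
  exists {ffun Q -> Q}, [ffun q => q], dQ,
    (fun phi : {ffun Q -> Q} => [ffun q => acc (phi q)] == f) => w.
  rewrite foldl_dQ; split => [<-|/eqP <-]; [apply/eqP|]; apply/ffunP => q;
    by rewrite /cl !ffunE.
move=> x y [ec eg] t1 /predU1P [->|]; last exact: hg.
apply: funext => r; apply: propext; rewrite /rquo !H !foldl_cat.
by have /ffunP /(_ (foldl d q0 r)) := ec; rewrite !ffunE => ->.
Qed.
End Residuals.

(** * Rational subsets of the channel monoid *)

Section DfaWalk.
Variables (A Q : finType) (d : Q -> A -> Q).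

Definition walk_via (X : seq Q) p q (w : seq A) :=
  foldl d p w = q /\ forall i, 0 < i < size w -> foldl d p (take i w) \in X.

Lemma walk_via_sub X Y p q w : {subset X <= Y} -> walk_via X p q w -> walk_via Y p q w.
Proof. by move=> sXY [e h]; split => // i /h /sXY. Qed.

Lemma walk_via_cat Y p r q u v :
  walk_via Y p r u -> walk_via Y r q v -> r \in Y -> walk_via Y p q (u ++ v).
Proof.
move=> [e1 h1] [e2 h2] rY; split; first by rewrite foldl_cat e1.
move=> i /andP [i0]; rewrite size_cat take_cat.
case: (ltnP i (size u)) => [iu _|ui iuv]; first by apply: h1; rewrite i0 iu.
rewrite foldl_cat e1; case: (ltnP 0 (i - size u)) => [p0|].
  by apply: h2; rewrite p0 /= ltn_subLR // addnC.
by rewrite leqn0 => /eqP ->; rewrite take0.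
Qed.

Lemma walk_via_nil p q w : walk_via [::] p q w <->
  (w = [::] /\ p = q) \/ (exists a, w = [:: a] /\ d p a = q).
Proof.
split.
- case: w => [[e _]|a [|b w] [e h]]; first by left.
    by right; exists a.
  by have := h 1 isT.
- case=> [[-> ->]|[a [-> <-]]]; split => //= i /andP [h1 h2]; by case: i h1 h2 => [|[]].
Qed.

Lemma walk_via_first s0 X p q w : walk_via (s0 :: X) p q w ->
  walk_via X p q w \/ exists i, [/\ 0 < i < size w, walk_via X p s0 (take i w)
                                    & walk_via (s0 :: X) s0 q (drop i w)].
Proof.
move=> [e h].
have [ex|nex] := pselect (exists i, (0 < i < size w) && (foldl d p (take i w) == s0));
  last first.
  left; split => // i hi; have := h i hi; rewrite inE => /predU1P [e2|//].
  by case: nex; exists i; rewrite hi e2 eqxx.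
right; case: (ex_minnP ex) => i /andP [hi /eqP ei] imin.
have iw : i <= size w by case/andP: hi => _ /ltnW.
exists i; split => //.
  split => // j; rewrite size_takel // => /andP [j0 ji].
  rewrite take_takel; last exact: ltnW.
  have jw : 0 < j < size w by rewrite j0 (ltn_trans ji) //; case/andP: hi.
  have := h j jw; rewrite inE => /predU1P [ej|//].
  by have := imin j; rewrite jw ej eqxx leqNgt ji => /(_ isT).
split; first by rewrite -ei -foldl_cat cat_take_drop.
move=> j; rewrite size_drop => /andP [j0 jl].
have := h (i + j); rewrite takeD foldl_cat ei; apply.
by rewrite addn_gt0 j0 orbT /= -ltn_subRL.
Qed.

Lemma walk_via_loops s0 X q v : walk_via (s0 :: X) s0 q v ->
  exists v2 v3, [/\ v = v2 ++ v3, kstar (walk_via X s0 s0) v2 & walk_via X s0 q v3].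
Proof.
elim: {v}(size v) {-2}v (leqnn (size v)) => [|n IH] v hn /walk_via_first
  [hv|[i [/andP [i0 iv] h1 h2]]].
- by exists [::], v; split => //; constructor.
- by have := leq_trans (leq_trans i0 (ltnW iv)) hn.
- by exists [::], v; split => //; constructor.
- have [|v2 [v3 [e hs hw]]] := IH (drop i v) _ h2.
    by rewrite size_drop leq_subLR (leq_trans hn) // -add1n leq_add2r.
  exists (take i v ++ v2), v3; rewrite -catA -e cat_take_drop; split => //.
  by constructor.
Qed.

(* The McNaughton-Yamada recursion: a walk through [s0 :: X] either avoids
   [s0] or splits at its first and last visit to [s0]. *)
Lemma walk_via_cons s0 X p q w : walk_via (s0 :: X) p q w <->
  walk_via X p q w \/ exists w1 w2 w3, [/\ w = w1 ++ w2 ++ w3, walk_via X p s0 w1,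
      kstar (walk_via X s0 s0) w2 & walk_via X s0 q w3].
Proof.
have sub : {subset X <= s0 :: X} by move=> x hx; rewrite inE hx orbT.
have s0in : s0 \in s0 :: X by rewrite inE eqxx.
split.
- move/walk_via_first => [h|[i [_ h1 /walk_via_loops [v2 [v3 [e hs hw]]]]]]; first by left.
  by right; exists (take i w), v2, v3; rewrite -e cat_take_drop.
- case=> [|[w1 [w2 [w3 [-> h1 h2 h3]]]]]; first exact: walk_via_sub.
  have loops v : kstar (walk_via X s0 s0) v -> walk_via (s0 :: X) s0 s0 v.
    elim=> [|x y hx _ hy]; first by split => // i; rewrite andbF.
    by apply: (walk_via_cat _ _ s0in) => //; apply: walk_via_sub hx.
  apply: (walk_via_cat _ _ s0in); first exact: walk_via_sub h1.
  by apply: (walk_via_cat _ _ s0in); [apply: loops | apply: walk_via_sub h3].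
Qed.

End DfaWalk.

Section RationalSets.
Variables (E : finType) (M : E -> finType).
Local Notation chn := (forall e, seq (M e)).
Implicit Types X Y : chn -> Prop.

Lemma rational0 : rational (fun _ : chn => False).
Proof. by apply: rat_ext (rat_fin [::]) _ => C; split => // -[]. Qed.

Lemma rational_bigcup (I : eqType) (s : seq I) (Xs : I -> chn -> Prop) :
  (forall i, rational (Xs i)) -> rational (fun C => exists2 i, i \in s & Xs i C).
Proof.
move=> h; elim: s => [|a s IH]; first by apply: rat_ext rational0 _ => C; split => // -[].
apply: rat_ext (rat_union (h a) IH) _ => C; split.
  by case=> [ha|[i hi hx]]; [exists a | exists i]; rewrite ?inE ?eqxx ?hi ?orbT.
by case=> i /predU1P [->|hi] hx; [left | right; exists i].
Qed.

Definition slice (b : E) X : seq (M b) -> Prop :=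
  fun x => exists C, X C /\ C b = x /\ forall xi, xi != b -> C xi = [::].
Arguments slice : clear implicits.

Lemma slice_mcat (b : E) (C1 C2 : chn) : (forall xi, xi != b -> mcat C1 C2 xi = [::]) ->
  (forall xi, xi != b -> C1 xi = [::]) /\ (forall xi, xi != b -> C2 xi = [::]).
Proof. by move=> o; split=> xi /o; rewrite /mcat; case: (C1 xi). Qed.

Lemma rational_slice (b : E) X : rational X -> fin_residuals (slice b X).
Proof.
elim=> {X} [s|X Y _ hX _ hY|X Y _ hX _ hY|X _ hX|X Y _ hX eXY].
- pose C i := nth (munit M) s i.
  apply: fin_residuals_ext (fin_residuals_finite (iota 0 (size s))
    (fun i => forall xi, xi != b -> C i xi = [::]) (fun i => C i b)) => w; split.
    by move=> [i]; rewrite mem_iota => hi [o ->]; exists (C i); split => //; exists i.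
  by move=> [_ [[i hi ->] [<- o]]]; exists i; rewrite ?mem_iota.
- apply: fin_residuals_ext (fin_residualsU hX hY) => w; split.
    by case=> [[C [hC e]]|[C [hC e]]]; exists C; split => //; [left|right].
  by move=> [C [[hC|hC] e]]; [left|right]; exists C.
- apply: fin_residuals_ext (fin_residuals_cat hX hY) => w; split.
    move=> [w1 [w2 [-> [[C1 [h1 [e1 o1]]] [C2 [h2 [e2 o2]]]]]]].
    exists (mcat C1 C2); split; first by exists C1, C2.
    by rewrite /mcat e1 e2; split => // xi /[dup] /o1 -> /o2 ->.
  move=> [C [[C1 [C2 [h1 [h2 ->]]]] [<- /slice_mcat [o1 o2]]]].
  by exists (C1 b), (C2 b); split => //; split; [exists C1 | exists C2].
- apply: fin_residuals_ext (fin_residuals_star hX) => w; split.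
    elim=> [|u v [C1 [h1 [e1 o1]]] _ [C2 [h2 [e2 o2]]]].
      by exists (munit M); do !split => //; constructor.
    exists (mcat C1 C2); split; first by constructor.
    by rewrite /mcat e1 e2; split => // xi /[dup] /o1 -> /o2 ->.
  move=> [C [hC [<- o]]]; elim: hC o => [|C1 C2 h1 _ IH] o; first by constructor.
  have [o1 o2] := slice_mcat o.
  by constructor; [exists C1 | exact: IH].
- by apply: fin_residuals_ext hX => w; split=> -[C [/eXY hC h]]; exists C.
Qed.

Definition chan1 (e : E) (x : seq (M e)) : chn := dfwith (munit M) x.

Lemma chan1_in e (x : seq (M e)) : chan1 x e = x.
Proof. exact: dfwith_in. Qed.

Lemma chan1_out e (x : seq (M e)) xi : e != xi -> chan1 x xi = [::].
Proof. exact: dfwith_out. Qed.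


Lemma chan1_cat e (u v : seq (M e)) : chan1 (u ++ v) = mcat (chan1 u) (chan1 v).
Proof.
apply: functional_extensionality_dep => xi; rewrite /mcat.
by case: (eqVneq e xi) => [<-|ne]; rewrite ?chan1_in ?chan1_out.
Qed.

Lemma chan1_nil e : chan1 (e := e) [::] = munit M.
Proof.
by apply: functional_extensionality_dep => xi; case: (eqVneq e xi) => [<-|ne];
  rewrite ?chan1_in ?chan1_out.
Qed.

Definition single_chan (e : E) (L : seq (M e) -> Prop) : chn -> Prop :=
  fun C => exists2 x, L x & C = chan1 x.

Lemma rational_single_chan_ext e (L L' : seq (M e) -> Prop) :
  (forall w, L w <-> L' w) -> rational (single_chan L) -> rational (single_chan L').
Proof. by move=> eL /rat_ext; apply=> C; split=> -[x /eL]; exists x. Qed.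

Lemma rational_single_chan_seq e (s : seq (seq (M e))) :
  rational (single_chan (fun x => x \in s)).
Proof.
apply: rat_ext (rat_fin (map (@chan1 e) s)) _ => C; split.
  by move=> [i]; rewrite size_map => hi ->; rewrite (nth_map [::]) //; exists (nth [::] s i);
    rewrite ?mem_nth.
move=> [x /(nthP [::]) [i hi <-] ->]; exists i; rewrite ?size_map //.
by rewrite (nth_map [::]).
Qed.

Lemma rational_single_chanU e (L1 L2 : seq (M e) -> Prop) :
  rational (single_chan L1) -> rational (single_chan L2) ->
  rational (single_chan (fun w => L1 w \/ L2 w)).
Proof.
move=> h1 h2; apply: rat_ext (rat_union h1 h2) _ => C; split.
  by case=> -[x hx ->]; exists x => //; [left | right].
by case=> x [] hx ->; [left | right]; exists x.
Qed.

Lemma rational_single_chan_cat e (L1 L2 : seq (M e) -> Prop) :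
  rational (single_chan L1) -> rational (single_chan L2) ->
  rational (single_chan (lang_cat L1 L2)).
Proof.
move=> h1 h2; apply: rat_ext (rat_prod h1 h2) _ => C; split.
  move=> [_ [_ [[x1 l1 ->] [[x2 l2 ->] ->]]]].
  by exists (x1 ++ x2); [exists x1, x2 | rewrite chan1_cat].
move=> [x [w1 [w2 [-> [l1 l2]]]] ->].
by exists (chan1 w1), (chan1 w2); rewrite chan1_cat; split; [exists w1 | split; first exists w2].
Qed.

Lemma rational_single_chan_star e (L : seq (M e) -> Prop) :
  rational (single_chan L) -> rational (single_chan (kstar L)).
Proof.
move=> h; apply: rat_ext (rat_star h) _ => C; split.
- elim=> [|_ C2 [u hu ->] _ [v hv ->]]; first by exists [::]; rewrite ?chan1_nil //; constructor.
  by exists (u ++ v); [constructor | rewrite chan1_cat].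
- move=> [x hx ->]; elim: hx => [|u v hu _ IH]; first by rewrite chan1_nil; constructor.
  by rewrite chan1_cat; constructor => //; exists u.
Qed.

Lemma rational_single_chan_walk e (Q : finType) (d : Q -> M e -> Q) (X : seq Q) p q :
  rational (single_chan (walk_via d X p q)).
Proof.
elim: X p q => [|s0 X IH] p q.
  pose s := (if p == q then [:: [::]] else [::]) ++
            [seq [:: a] | a <- enum (M e) & d p a == q].
  apply: rational_single_chan_ext (rational_single_chan_seq s) => w.
  rewrite walk_via_nil mem_cat; split.
    case/orP=> [|/mapP [a]]; first by case: eqP => [-> /[1!inE] /eqP ->|]; [left|].
    by rewrite mem_filter => /andP [/eqP <- _] ->; right; exists a.
  case=> [[-> ->]|[a [-> <-]]]; first by rewrite eqxx.
  by apply/orP; right; apply/mapP; exists a; rewrite // mem_filter eqxx mem_enum.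
apply: rational_single_chan_ext (rational_single_chanU (IH p q)
  (rational_single_chan_cat (IH p s0)
    (rational_single_chan_cat (rational_single_chan_star (IH s0 s0)) (IH s0 q)))) => w.
rewrite walk_via_cons; split.
  case=> [h|[w1 [w' [-> [h1 [w2 [w3 [-> [h2 h3]]]]]]]]]; first by left.
  by right; exists w1, w2, w3.
case=> [h|[w1 [w2 [w3 [-> h1 h2 h3]]]]]; first by left.
by right; exists w1, (w2 ++ w3); do !split => //; exists w2, w3.
Qed.

Lemma rational_single_chan e (L : seq (M e) -> Prop) :
  regular L -> rational (single_chan L).
Proof.
move=> [Q [q0 [d [F H]]]].
apply: rat_ext (rational_bigcup [seq q <- enum Q | F q]
  (fun q => rational_single_chan_walk d (enum Q) q0 q)) _ => C; split.
  move=> [q]; rewrite mem_filter => /andP [Fq _] [x [ex _] ->].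
  by exists x; rewrite // H ex.
move=> [x /H hx ->]; exists (foldl d q0 x); first by rewrite mem_filter hx mem_enum.
by exists x; split => // i _; rewrite mem_enum.
Qed.

Lemma rational_prod (Ls : forall e, seq (M e) -> Prop) :
  (forall e, regular (Ls e)) -> rational (fun C : chn => forall e, Ls e (C e)).
Proof.
move=> hreg.
suff /(_ (enum E) (enum_uniq _)) : forall es : seq E, uniq es ->
    rational (fun C : chn => (forall e, e \in es -> Ls e (C e)) /\
                             forall e, e \notin es -> C e = [::]).
  move/rat_ext; apply=> C; split=> [[h _] e|h]; first by apply: h; rewrite mem_enum.
  by split=> // e; rewrite mem_enum.
elim=> [_|a es IH /andP [aes ues]].
  apply: rat_ext (rat_fin [:: munit M]) _ => C; split; first by case=> -[|//] _ ->.
  by move=> [_ h]; exists 0 => //; apply: functional_extensionality_dep => e; rewrite h.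
apply: rat_ext (rat_prod (rational_single_chan (hreg a)) (IH ues)) _ => C; split.
  move=> [_ [C2 [[x hx ->] [[h2 o2] ->]]]]; split=> e; rewrite inE /mcat.
    case: (eqVneq a e) => [<- _|ae /h2]; first by rewrite chan1_in o2 ?cats0.
    by rewrite chan1_out.
  by rewrite negb_or eq_sym => /andP [ea ee]; rewrite chan1_out // o2.
move=> [h o]; exists (chan1 (C a)), (fun xi => if xi == a then [::] else C xi).
split; first by exists (C a) => //; apply: h; rewrite inE eqxx.
split.
  split=> e; case: eqP => [-> //|ne ee]; first by rewrite (negbTE aes).
    by apply: h; rewrite inE ee orbT.
  by apply: o; rewrite inE negb_or ee andbT; apply/eqP.
apply: functional_extensionality_dep => e; rewrite /mcat.
by case: (eqVneq a e) => [<-|ae]; rewrite ?chan1_in ?cats0 ?chan1_out.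
Qed.

Lemma recognizable_rational X : recognizable X -> rational X.
Proof.
move=> [n [Ls [hreg hX]]].
apply: rat_ext (rational_bigcup (enum 'I_n) (fun i => rational_prod (hreg i))) _ => C.
by rewrite hX; split=> [[i _ h]|[i h]]; exists i; rewrite ?mem_enum.
Qed.

Lemma recognizable_saturated (T : finType) (g : forall e, seq (M e) -> T) X :
  (forall e t, regular (fun x => g e x = t)) ->
  (forall C C', (forall e, g e (C e) = g e (C' e)) -> X C -> X C') -> recognizable X.
Proof.
move=> rg satX; pose cls C := [ffun e => g e (C e)].
pose A := [set i | `[< exists2 C, X C & cls C = i >]].
exists #|A|, (fun i e x => g e x = enum_val (A := A) i e).
split=> [i e|C]; first exact: rg.
split=> [hC|[i hi]].
  have CA : cls C \in A by rewrite inE; apply/asboolP; exists C.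
  by exists (enum_rank_in CA (cls C)) => e; rewrite enum_rankK_in // ffunE.
have /[!inE] /asboolP [C0 hC0 eC0] := enum_valP i.
by apply: satX hC0 => e; rewrite hi -eC0 ffunE.
Qed.

End RationalSets.

(** * Runs of a protocol *)

Section DFunWith.
Variables (I : eqType) (T : I -> Type) (f : forall i, T i).

Lemma dfwith_id i : dfwith f (f i) = f.
Proof.
by apply: functional_extensionality_dep => j; case: (eqVneq i j) => [<-|ne];
  rewrite ?dfwith_in ?dfwith_out.
Qed.

Lemma dfwith_dfwith i (x y : T i) : dfwith (dfwith f x) y = dfwith f y.
Proof.
by apply: functional_extensionality_dep => j; case: (eqVneq i j) => [<-|ne];
  rewrite ?dfwith_in ?dfwith_out.
Qed.

End DFunWith.

Section Protocol.
Variable P : cfsm.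
Local Notation act := (action (fun e : edge P => msg e)).
Local Notation sendm b := (@Snd _ (fun e : edge P => msg e) _ b).
Local Notation recvm b := (@Rcv _ (fun e : edge P => msg e) _ b).
Implicit Types (S : cstate P) (C : chan P).

Lemma reach_send S C i q (e : edge P) (b : msg e) : reach S C ->
  tl e = i -> trans (S i) (sendm b) q -> reach (dfwith S q) (dfwith C (rcons (C e) b)).
Proof.
move=> rSC htl ht; apply: reachS rSC _; exists i, q; split; first exact: dfwith_in.
split; first by move=> j /negPf ne; rewrite dfwith_out // eq_sym ne.
exists e, b; split; first by move=> xi /negPf ne; rewrite dfwith_out // eq_sym ne.
by left; rewrite dfwith_in.
Qed.

Lemma reach_recv S C i q (e : edge P) (b : msg e) x : reach S C ->
  hd e = i -> trans (S i) (recvm b) q -> C e = b :: x -> reach (dfwith S q) (dfwith C x).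
Proof.
move=> rSC hhd ht hC; apply: reachS rSC _; exists i, q; split; first exact: dfwith_in.
split; first by move=> j /negPf ne; rewrite dfwith_out // eq_sym ne.
exists e, b; split; first by move=> xi /negPf ne; rewrite dfwith_out // eq_sym ne.
by right; rewrite dfwith_in.
Qed.

Lemma step_inv S C S' C' : step S C S' C' -> exists i (q : st i) (e : edge P) (b : msg e),
  S' = dfwith S q /\
  ([/\ tl e = i, trans (S i) (sendm b) q & C' = dfwith C (rcons (C e) b)] \/
   [/\ hd e = i, trans (S i) (recvm b) q & C e = b :: C' e /\ C' = dfwith C (C' e)]).
Proof.
move=> [i [q [hSi [hSo [e [b [hCo hC]]]]]]]; exists i, q, e, b.
have eS : S' = dfwith S q.
  apply: functional_extensionality_dep => j; case: (eqVneq i j) => [<-|ne].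
    by rewrite dfwith_in.
  by rewrite dfwith_out // hSo // eq_sym.
have eC x : C' e = x -> C' = dfwith C x.
  move=> <-; apply: functional_extensionality_dep => xi.
  case: (eqVneq e xi) => [<-|ne]; first by rewrite dfwith_in.
  by rewrite dfwith_out // hCo // eq_sym.
split => //; case: hC => [[? [? hCe]]|[? [? hCe]]]; [left|right]; split => //.
  exact: eC.
by split => //; apply: eC.
Qed.

Definition tmsg := {e : edge P & msg e}.
Definition tagm (e : edge P) (b : msg e) : tmsg := Tagged (fun e => msg e) b.
Definition tagw (e : edge P) (x : seq (msg e)) : seq tmsg := map (@tagm e) x.

Lemma tagm_inj e : injective (@tagm e).
Proof. by move=> x y; apply: eq_from_Tagged. Qed.

Lemma tagw_inj e : injective (@tagw e).
Proof. exact/inj_map/tagm_inj. Qed.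

Fixpoint sends (s : seq act) : seq tmsg :=
  if s is a :: r then (if a is Snd e b then tagm b :: sends r else sends r) else [::].
Fixpoint recvs (s : seq act) : seq tmsg :=
  if s is a :: r then (if a is Rcv e b then tagm b :: recvs r else recvs r) else [::].

Lemma sends_cat s1 s2 : sends (s1 ++ s2) = sends s1 ++ sends s2.
Proof. by elim: s1 => //= -[] e b s ->. Qed.

Lemma recvs_cat s1 s2 : recvs (s1 ++ s2) = recvs s1 ++ recvs s2.
Proof. by elim: s1 => //= -[] e b s ->. Qed.

Fixpoint lrun (j : node P) (s : st j) (a : seq act) (q : st j) : Prop :=
  if a is x :: r then exists s', trans s x s' /\ lrun s' r q else s = q.

Lemma lrun_cat j (s q : st j) a1 a2 :
  lrun s (a1 ++ a2) q <-> exists r, lrun s a1 r /\ lrun r a2 q.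
Proof.
elim: a1 s => [|x a1 IH] s /=; first by split => [h|[r [-> h]]] //; exists s.
split; first by move=> [s' [t /IH [r [h1 h2]]]]; exists r; split => //; exists s'.
by move=> [r [[s' [t h1]] h2]]; exists s'; split => //; apply/IH; exists r.
Qed.

Lemma lrun_rcons j (s r q : st j) a x : lrun s a r -> trans r x q -> lrun s (rcons a x) q.
Proof. by move=> h t; rewrite -cats1; apply/lrun_cat; exists r; split => //; exists q. Qed.

Lemma sends_eq_cat (a : seq act) z w : sends a = z ++ w ->
  exists a1 a2, a = a1 ++ a2 /\ sends a1 = z.
Proof.
elim: a z => [|x a IH] z /=; first by case: z => // _; exists [::], [::].
case: z => [|z0 z] hs; first by exists [::], (x :: a).
case: x hs => e b /=.
  by case=> <- /IH [a1 [a2 [-> <-]]]; exists (sendm b :: a1), a2.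
by move/(IH (z0 :: z)) => [a1 [a2 [-> h]]]; exists (recvm b :: a1), a2; rewrite /= h.
Qed.

Lemma reach_lrun S C j a q (ei eo : edge P) z : ei != eo ->
  (forall e, hd e = j -> e = ei) -> (forall e, tl e = j -> e = eo) ->
  reach S C -> lrun (S j) a q -> tagw (C ei) = recvs a ++ z ->
  exists C', [/\ reach (dfwith S q) C', tagw (C' ei) = z,
    tagw (C' eo) = tagw (C eo) ++ sends a & forall xi, xi != ei -> xi != eo -> C' xi = C xi].
Proof.
move=> neio ein eout; elim: a S C => [|x a IH] S C rSC /=.
  by move=> <- hz; exists C; rewrite dfwith_id cats0.
move=> [s' [t hrun]]; have := trans_wf t.
case: x t => e b t /= /eqP he hC.
- have ee := eout _ he; subst e.
  have [|||C' [r' hi ho hxi]] := IH (dfwith S s') (dfwith C (rcons (C eo) b)).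
  + exact: reach_send rSC he t.
  + by rewrite dfwith_in.
  + by rewrite dfwith_out // eq_sym.
  exists C'; split => //; first by rewrite dfwith_dfwith in r'.
    by rewrite ho dfwith_in /tagw -cats1 map_cat -catA.
  by move=> xi h1 h2; rewrite hxi // dfwith_out // eq_sym.
- have ee := ein _ he; subst e.
  move: hC; case hCe: (C ei) => [|b' y] //= [/tagm_inj eb hy]; subst b'.
  have [|||C' [r' hi ho hxi]] := IH (dfwith S s') (dfwith C y).
  + exact: reach_recv rSC he t hCe.
  + by rewrite dfwith_in.
  + by rewrite dfwith_in.
  exists C'; split => //; first by rewrite dfwith_dfwith in r'.
    by rewrite ho dfwith_out.
  by move=> xi h1 h2; rewrite hxi // dfwith_out // eq_sym.
Qed.

Lemma regular_lrun (j : node P) (s0 sf : st j) (L : seq tmsg -> Prop) :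
  regular L -> regular (fun u => exists a, [/\ lrun s0 a sf, L (recvs a) & sends a = u]).
Proof.
move=> [Q [q0 [d [F H]]]]; apply: fin_residuals_regular.
exists {set (st j * Q)}.
exists (fun u => [set x | `[< exists a, [/\ lrun s0 a x.1, sends a = u &
                                     foldl d q0 (recvs a) = x.2] >]]).
exists (fun (R : {set st j * Q}) w => exists2 x, x \in R & exists a, [/\ lrun x.1 a sf,
                     F (foldl d x.2 (recvs a)) & sends a = w]).
move=> u w; split.
- move=> [a [hp hL /[dup] hs /sends_eq_cat [a1 [a2 [ea es1]]]]].
  move: hp hL hs; rewrite ea lrun_cat sends_cat recvs_cat es1 => -[r [h1 h2]] hL /catI hs2.
  exists (r, foldl d q0 (recvs a1)); first by rewrite inE; apply/asboolP; exists a1.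
  by exists a2; split => //; move/H: hL; rewrite foldl_cat.
- move=> [x]; rewrite inE => /asboolP [a1 [hp1 hs1 hf1]] [a2 [hp2 hF hs2]].
  exists (a1 ++ a2); split; first by apply/lrun_cat; exists x.1.
    by apply/H; rewrite recvs_cat foldl_cat hf1.
  by rewrite sends_cat hs1 hs2.
Qed.

Lemma regular_tagw (e : edge P) (L : seq (msg e) -> Prop) :
  regular L -> regular (fun y => exists c, y = tagw c /\ L c).
Proof.
move=> [Q [q0 [d [F H]]]]; apply: fin_residuals_regular.
exists (option Q).
exists (fun u => if pselect (exists u', u = tagw u') is left ex
                 then Some (foldl d q0 (sval (cid ex))) else None).
exists (fun o w => if o is Some q then exists c, w = tagw c /\ F (foldl d q c) else False).
move=> u w; case: pselect => [ex|nex]; last first.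
  split => // -[c [ec _]]; have [t1 [t2 [_ [e1 _]]]] := map_eq_cat (esym ec).
  by apply: nex; exists t1.
case: cid => /= u' ->; split.
  move=> [c [ec hc]]; have [t1 [t2 [ect [/tagw_inj e1 e2]]]] := map_eq_cat (esym ec).
  by subst c t1; exists t2; split => //; move/H: hc; rewrite foldl_cat.
move=> [c [-> hF]]; exists (u' ++ c); split; first by rewrite /tagw map_cat.
by apply/H; rewrite foldl_cat.
Qed.

(** * Cyclic protocols *)

Section Cycle.
Variables (beta : edge P) (k : nat) (m : nat -> node P) (ch : nat -> edge P).
Hypotheses (k_gt0 : 0 < k) (ch_k : ch k = beta)
  (tl_ch : forall t, tl (ch t) = m t) (hd_ch : forall t, hd (ch t) = m t.+1)
  (m_wrap : m k.+1 = m 0)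
  (m_inj : forall s t, s <= k -> t <= k -> m s = m t -> s = t)
  (m_surj : forall j, exists2 t, t <= k & m t = j)
  (ch_surj : forall e, exists2 t, t <= k & ch t = e).

Implicit Types (p q : cstate P) (D : chan P).

Lemma m_neq s t : s <= k -> t <= k -> s != t -> m s != m t.
Proof. by move=> hs ht; apply: contraNneq => /m_inj ->. Qed.

Lemma ch_inj s t : s <= k -> t <= k -> ch s = ch t -> s = t.
Proof. by move=> hs ht /(congr1 (@tl P)); rewrite !tl_ch; apply: m_inj. Qed.

Lemma tl_inj : injective (@tl P).
Proof.
move=> e1 e2; have [s hs <-] := ch_surj e1; have [t ht <-] := ch_surj e2.
by rewrite !tl_ch => /m_inj -> .
Qed.

Lemma hd_inj : injective (@hd P).
Proof.
move=> e1 e2; have [s hs <-] := ch_surj e1; have [t ht <-] := ch_surj e2.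
have succ u : u <= k -> m u.+1 = m (if u == k then 0 else u.+1).
  by case: eqP => // ->.
rewrite !hd_ch (succ s hs) (succ t ht) => /m_inj e; congr ch.
by case: eqP e => [->|sk]; case: eqP => [->|tk] /= e; have := e _ _; lia.
Qed.

Lemma hd_beta : hd beta = m 0.
Proof. by rewrite -ch_k hd_ch m_wrap. Qed.

Lemma tl_beta : tl beta = m k.
Proof. by rewrite -ch_k tl_ch. Qed.

Lemma chN_beta t : t < k -> ch t != beta.
Proof. by move=> tk; rewrite -ch_k; apply/eqP => /ch_inj e; have := e _ _; lia. Qed.

Definition prev t := if t == 0 then k else t.-1.

Lemma hd_ch_prev t : hd (ch (prev t)) = m t.
Proof. by rewrite /prev hd_ch; case: eqP => [->|/eqP t0]; rewrite ?m_wrap ?prednK ?lt0n. Qed.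

Fixpoint states_upto p q t : cstate P :=
  if t is t'.+1 then dfwith (states_upto p q t') (q (m t')) else p.

Lemma states_upto_ge p q t j : (forall s, s < t -> m s != j) -> states_upto p q t j = p j.
Proof.
elim: t => //= t IH h; rewrite dfwith_out ?IH ?h //.
by move=> s st; apply: h; rewrite ltnS ltnW.
Qed.

Lemma states_upto_all p q : states_upto p q k.+1 = q.
Proof.
suff sq t s : t <= k.+1 -> s < t -> states_upto p q t (m s) = q (m s).
  by apply: functional_extensionality_dep => j; have [t ht <-] := m_surj j; apply: sq.
elim: t => //= t IH ht hst; case: (eqVneq s t) => [->|ne]; first by rewrite dfwith_in.
by rewrite dfwith_out ?IH ?m_neq //; lia.
Qed.

Ltac case_ifs := repeat case: ifP => ?; try (exfalso; lia).

Section Chain.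
Variables (p q : cstate P) (D0 D : chan P) (acts : node P -> seq act) (y : seq tmsg).
Hypotheses (r0 : reach p D0) (D0_out : forall xi, xi != beta -> D0 xi = [::])
  (runs : forall j, lrun (p j) (acts j) (q j))
  (chain : forall t, t < k -> sends (acts (m t)) = recvs (acts (m t.+1)) ++ tagw (D (ch t)))
  (D0_beta : tagw (D0 beta) = recvs (acts (m 0)) ++ y)
  (D_beta : tagw (D beta) = y ++ sends (acts (m k))).

(* The machines [m 0], ..., [m k] run their local runs one after the other;
   [chain_content t s] is the content of [ch s] once [m 0], ..., [m t.-1] are done. *)
Definition chain_content t s :=
  if s == k then
    (if t == 0 then tagw (D0 beta) else if t <= k then y else y ++ sends (acts (m k)))
  else if t <= s then [::] else if t == s.+1 then sends (acts (m s)) else tagw (D (ch s)).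

Lemma reach_chain_stage t : t <= k.+1 -> exists2 Ct, reach (states_upto p q t) Ct &
  forall s, s <= k -> tagw (Ct (ch s)) = chain_content t s.
Proof.
elim: t => [_|t IH /ltnSE tk].
  exists D0 => // s sk; rewrite /chain_content; case: eqP => [->|ne]; first by rewrite ch_k.
  by rewrite D0_out // chN_beta //; lia.
have [Ct rt hCt] := IH (leqW tk).
have prev_le : prev t <= k by rewrite /prev; case: eqP; lia.
have run_t : lrun (states_upto p q t (m t)) (acts (m t)) (q (m t)).
  by rewrite states_upto_ge // => s st; apply: m_neq; lia.
have in_prev : tagw (Ct (ch (prev t))) =
    recvs (acts (m t)) ++ (if t == 0 then y else tagw (D (ch t.-1))).
  rewrite hCt // /chain_content /prev; case: (posnP t) => [->|t_gt0]; case_ifs; first done.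
  by rewrite chain ?prednK //; lia.
have [|||C' [rC' hin hout hoth]] := reach_lrun (eo := ch t) _ _ _ rt run_t in_prev.
- by apply/eqP => /(ch_inj prev_le tk); rewrite /prev; case: eqP; lia.
- by move=> e; rewrite -hd_ch_prev => /hd_inj.
- by move=> e; rewrite -tl_ch => /tl_inj.
exists C' => // s sk.
have [->|nst] := eqVneq s t.
  by rewrite hout hCt // /chain_content; case: (eqVneq t k) => [->|ntk]; case_ifs.
have [->|nsp] := eqVneq s (prev t).
  by rewrite hin /chain_content /prev; case: (posnP t) => [t0|t_gt0]; case_ifs.
rewrite hoth ?hCt //; last first.
- by apply/eqP => /(ch_inj sk tk); apply/eqP.
- by apply/eqP => /(ch_inj sk prev_le); apply/eqP.
by move: nsp; rewrite /chain_content /prev; case: (posnP t) => [t0|t_gt0] nsp; case_ifs.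
Qed.

Lemma reach_chain : reach q D.
Proof.
have [Ck rk hCk] := reach_chain_stage (leqnn k.+1); rewrite states_upto_all in rk.
suff -> : D = Ck by [].
apply: functional_extensionality_dep => e; have [s hs <-] := ch_surj e.
apply: tagw_inj; rewrite hCk // /chain_content.
by case: eqP => [->|sk]; rewrite ?ch_k ?D_beta; case_ifs.
Qed.

End Chain.

(* The pivot [(p, c)] accounts for everything [m k] did; from [p] the other
   machines ran [acts] to [S], consistently with the contents of the channels. *)
Definition decomposed S C := exists p c (acts : node P -> seq act),
  [/\ @Qset P beta p c, forall j, lrun (p j) (acts j) (S j), acts (m k) = [::],
      forall t, t < k -> sends (acts (m t)) = recvs (acts (m t.+1)) ++ tagw (C (ch t))
    & tagw c = recvs (acts (m 0)) ++ tagw (C beta)].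

Lemma decomposed_reach S C : decomposed S C -> reach S C.
Proof.
move=> [p [c [acts [[D [rD [Db Do]]] runs ak chain hc]]]].
by apply: (reach_chain (y := tagw (C beta))) rD Do runs chain _ _; rewrite ?Db ?ak ?cats0.
Qed.

Lemma decomposed_init : decomposed (@init_state P) (@chan0 P).
Proof.
exists (@init_state P), [::], (fun _ => [::]); split => //.
by exists (@chan0 P); split; first exact: reach0.
Qed.

Lemma decomposed_send S C i (q : st i) e (b : msg e) : tl e = i -> trans (S i) (sendm b) q ->
  decomposed S C -> decomposed (dfwith S q) (dfwith C (rcons (C e) b)).
Proof.
move=> htl ht [p [c [acts [hQ runs ak chain hc]]]].
have [eik|nik] := eqVneq i (m k).
  have ebeta : e = beta by apply: tl_inj; rewrite htl eik tl_beta.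
  subst e; have ai : acts i = [::] by rewrite eik.
  have pi : p i = S i by have := runs i; rewrite ai.
  exists (dfwith p q), (rcons c b), acts; split => //.
  - have [D [rD [Db Do]]] := hQ; exists (dfwith D (rcons c b)); split.
      by rewrite -Db; apply: reach_send rD htl _; rewrite pi.
    split; first by rewrite dfwith_in.
    by move=> xi ne; rewrite dfwith_out 1?eq_sym // Do.
  - move=> j; case: (eqVneq i j) => [<-|ne]; first by rewrite !dfwith_in ai.
    by rewrite !dfwith_out.
  - by move=> t tk; rewrite chain // dfwith_out // eq_sym chN_beta.
  - by rewrite dfwith_in /tagw -!cats1 !map_cat -/(tagw _) -/(tagw _) hc catA.
have enb : e != beta by apply: contraNneq nik => eb; rewrite -htl eb tl_beta.
pose acts' := [eta acts with i |-> rcons (acts i) (sendm b)].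
have recvs' j : recvs (acts' j) = recvs (acts j).
  by rewrite /=; case: eqP => [->|//]; rewrite -cats1 recvs_cat cats0.
exists p, c, acts'; split => //.
- move=> j; rewrite /acts' /=; case: (eqVneq j i) => [->|ne]; last first.
    by rewrite dfwith_out // eq_sym.
  by rewrite dfwith_in; apply: lrun_rcons (runs i) ht.
- by rewrite /acts' /= eq_sym (negbTE nik).
- move=> t tk; rewrite recvs' /acts' /=.
  case: (eqVneq (m t) i) => [eim|nim].
    have ete : ch t = e by apply: tl_inj; rewrite tl_ch htl eim.
    by rewrite -eim -cats1 sends_cat chain // ete dfwith_in /tagw -cats1 map_cat catA.
  rewrite dfwith_out ?chain //; apply: contra_neq nim => ete.
  by rewrite -tl_ch -ete htl.
- rewrite recvs' dfwith_out //; exact: contra_neq enb.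
Qed.

Lemma decomposed_recv_other S C i (q : st i) e (b : msg e) x : i != m k -> hd e = i ->
  trans (S i) (recvm b) q -> C e = b :: x ->
  decomposed S C -> decomposed (dfwith S q) (dfwith C x).
Proof.
move=> nik hhd ht hC [p [c [acts [hQ runs ak chain hc]]]].
pose acts' := [eta acts with i |-> rcons (acts i) (recvm b)].
have sends' j : sends (acts' j) = sends (acts j).
  by rewrite /=; case: eqP => [->|//]; rewrite -cats1 sends_cat cats0.
have recvs_tail j : j != i -> recvs (acts' j) = recvs (acts j).
  by rewrite /= => /negPf ->.
have recvs_i : recvs (acts' i) = rcons (recvs (acts i)) (tagm b).
  by rewrite /= eqxx -cats1 recvs_cat cats1.
exists p, c, acts'; split => //.
- move=> j; rewrite /acts' /=; case: (eqVneq j i) => [->|ne]; last first.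
    by rewrite dfwith_out // eq_sym.
  by rewrite dfwith_in; apply: lrun_rcons (runs i) ht.
- by rewrite /acts' /= eq_sym (negbTE nik).
- move=> t tk; rewrite sends' chain //.
  case: (eqVneq (m t.+1) i) => [emi|nmi]; last first.
    rewrite recvs_tail // dfwith_out //; apply: contra_neq nmi => ete.
    by rewrite -hd_ch -ete hhd.
  have ete : ch t = e by apply: hd_inj; rewrite hd_ch hhd emi.
  by rewrite emi recvs_i ete dfwith_in hC -cats1 -catA.
- case: (eqVneq (m 0) i) => [emi|nmi]; last first.
    rewrite recvs_tail // dfwith_out //; apply: contra_neq nmi => eeb.
    by rewrite -hd_beta -eeb hhd.
  have eeb : beta = e by apply: hd_inj; rewrite hd_beta hhd emi.
  by subst e; rewrite emi recvs_i dfwith_in hc emi hC -cats1 -catA.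
Qed.

(* Tracing a prefix [z] of what [m t] sent back to the prefixes of the runs of
   [m 0], ..., [m t] that caused it. *)
Lemma prefix_chain (acts : node P -> seq act) t z : t < k ->
  (forall s, s < t -> exists w, sends (acts (m s)) = recvs (acts (m s.+1)) ++ w) ->
  (exists w, sends (acts (m t)) = z ++ w) ->
  exists pre : node P -> seq act, [/\ forall j, exists suf, acts j = pre j ++ suf,
    forall s, s < t -> sends (pre (m s)) = recvs (pre (m s.+1)) & sends (pre (m t)) = z].
Proof.
elim: t z => [|t IH] z tk hyp [w /sends_eq_cat [a1 [a2 [e1 e2]]]].
  exists [eta (fun=> [::]) with m 0 |-> a1]; split => //=; last by rewrite eqxx.
  by move=> j; case: eqP => [->|_]; [exists a2 | exists (acts j)].
have [|||pre [h1 h2 h3]] := IH (recvs a1); first by lia.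
- by move=> s st; apply: hyp; lia.
- have [w0 hw0] := hyp t (ltnSn t).
  by exists (recvs a2 ++ w0); rewrite hw0 e1 recvs_cat catA.
exists [eta pre with m t.+1 |-> a1]; split => /=; last by rewrite eqxx.
- by move=> j; case: eqP => [->|_]; [exists a2 | exact: h1].
- move=> s st; rewrite ifF; last by apply/negbTE/m_neq; lia.
  case: (eqVneq s t) => [->|ne]; first by rewrite eqxx h3.
  by rewrite ifF ?h2 //; [lia | apply/negbTE/m_neq; lia].
Qed.

Lemma Qset_advance p c p' (pre : node P -> seq act) y : @Qset P beta p c ->
  (forall j, lrun (p j) (pre j) (p' j)) ->
  (forall t, t < k -> sends (pre (m t)) = recvs (pre (m t.+1))) ->
  sends (pre (m k)) = [::] -> tagw c = recvs (pre (m 0)) ++ y ->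
  exists2 c', tagw c' = y & @Qset P beta p' c'.
Proof.
move=> [D [rD [Db Do]]] runs chain prek hc.
pose c' := drop (size (recvs (pre (m 0)))) c.
have hc' : tagw c' = y by rewrite /c' /tagw map_drop -/(tagw _) hc drop_size_cat.
exists c' => //; exists (dfwith (@chan0 P) c'); split; last first.
  by split=> [|xi ne]; rewrite ?dfwith_in ?dfwith_out 1?eq_sym.
apply: (reach_chain (y := y)) rD Do runs _ _ _; rewrite ?Db ?dfwith_in ?prek ?cats0 //.
by move=> t tk; rewrite chain // dfwith_out ?cats0 // eq_sym chN_beta.
Qed.

(* When [m k] receives, the pivot absorbs this receive together with the
   prefixes of the other runs that produced the received message. *)
Lemma decomposed_recv_last S C (q : st (m k)) (b : msg (ch k.-1)) x :
  trans (S (m k)) (recvm b) q -> C (ch k.-1) = b :: x ->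
  decomposed S C -> decomposed (dfwith S q) (dfwith C x).
Proof.
move=> ht hC [p [c [acts [hQ runs ak chain hc]]]].
have k1k : k.-1.+1 = k by rewrite prednK.
have mk_neq s : s < k -> m s != m k by move=> sk; apply: m_neq; lia.
have sk1 : sends (acts (m k.-1)) = [:: tagm b] ++ tagw x.
  by rewrite chain ?k1k ?ak ?hC //; lia.
have [||pre [pre_pref pre_chain pre_last]] := prefix_chain _ _ (ex_intro _ _ sk1).
- by lia.
- by move=> s sk; exists (tagw (C (ch s))); apply: chain; lia.
pose acts' j := drop (size (pre j)) (acts j).
have acts_split j : acts j = pre j ++ acts' j.
  by rewrite /acts'; have [suf ->] := pre_pref j; rewrite drop_size_cat.
have ak' : acts' (m k) = [::] by rewrite /acts' ak.
have mid j : exists r, lrun (p j) (pre j) r /\ lrun r (acts' j) (S j).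
  by apply/lrun_cat; rewrite -acts_split.
have [p0 hp0] := all_sig (fun j => cid (mid j)).
pose pre' := [eta pre with m k |-> [:: recvm b]].
have pk : p (m k) = S (m k) by have := runs (m k); rewrite ak.
have [||||c' hc' hQ'] := Qset_advance (p' := dfwith p0 q) (pre := pre')
    (y := recvs (acts' (m 0)) ++ tagw (C beta)) hQ _ _ _ _.
- move=> j /=; case: (eqVneq (m k) j) => [<-|ne]; last first.
    by rewrite dfwith_out //; case: (hp0 j).
  by rewrite dfwith_in; exists q; rewrite pk.
- move=> t tk /=; rewrite (negbTE (mk_neq t tk)).
  case: (eqVneq t k.-1) => [->|ne]; first by rewrite k1k eqxx pre_last.
  have t1k : t.+1 < k by lia.
  by rewrite (negbTE (mk_neq _ t1k)) pre_chain //; lia.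
- by rewrite /= eqxx.
- by rewrite hc acts_split /= (negbTE (mk_neq 0 k_gt0)) recvs_cat catA.
exists (dfwith p0 q), c', acts'; split => //.
- move=> j; case: (eqVneq (m k) j) => [<-|ne]; first by rewrite !dfwith_in ak'.
  by rewrite !dfwith_out //; case: (hp0 j).
- move=> t tk; have := chain t tk; rewrite (acts_split (m t)) sends_cat.
  case: (eqVneq t k.-1) => [->|ne]; first by rewrite k1k ak ak' hC dfwith_in pre_last => -[->].
  rewrite acts_split recvs_cat pre_chain -?catA => [/catI ->|]; last by lia.
  by rewrite dfwith_out //; apply: contra_neq ne => /(ch_inj (leq_pred k) (ltnW tk)) ->.
- by rewrite dfwith_out // chN_beta; lia.
Qed.

Lemma reach_decomposed S C : reach S C -> decomposed S C.
Proof.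
elim=> [|S1 C1 S' C' _ IH /step_inv [i [q [e [b [-> [[htl ht ->]|[hhd ht [hC ->]]]]]]]]].
- exact: decomposed_init.
- exact: decomposed_send IH.
have [eik|nik] := eqVneq i (m k); last exact: decomposed_recv_other hC IH.
move: hhd; subst i => hhd; have ee : e = ch k.-1 by apply: hd_inj; rewrite hhd hd_ch prednK.
by subst e; apply: decomposed_recv_last hC IH.
Qed.

Lemma Lang_decomposed S C : Lang S C <-> decomposed S C.
Proof. by split=> [/reach_decomposed|/decomposed_reach]. Qed.

Definition Qtag p : seq tmsg -> Prop := fun y => exists c, y = tagw c /\ @Qset P beta p c.

Definition run_lang S p t (L : seq tmsg -> Prop) : seq tmsg -> Prop :=
  fun u => exists a, [/\ lrun (p (m t)) a (S (m t)), L (recvs a) & sends a = u].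

(* Written as iterated right quotients by the channel contents, so that the
   dependence on each [C e] factors through finitely many regular classes. *)
Fixpoint chain_quo S p C t : seq tmsg -> Prop :=
  if t is t'.+1 then rquo (run_lang S p t' (chain_quo S p C t')) (tagw (C (ch t')))
  else rquo (Qtag p) (tagw (C beta)).

Lemma chain_quoP S p C t r : chain_quo S p C t r <->
  exists c (acts : nat -> seq act), [/\ @Qset P beta p c,
    forall s, s < t -> lrun (p (m s)) (acts s) (S (m s)),
    forall s, s.+1 < t -> sends (acts s) = recvs (acts s.+1) ++ tagw (C (ch s)) &
    if t is t'.+1 then tagw c = recvs (acts 0) ++ tagw (C beta) /\
                       sends (acts t') = r ++ tagw (C (ch t'))
    else tagw c = r ++ tagw (C beta)].
Proof.
elim: t r => [|t IH] r /=.
  split; first by move=> [c [e hq]]; exists c, (fun _ => [::]).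
  by move=> [c [acts [hq _ _ e]]]; exists c.
split.
  move=> [a [hpa /IH [c [acts [hq hl hc hif]]] ha]].
  exists c, [eta acts with t |-> a]; split => //=.
  - by move=> s st; case: eqP => [->|ne] //; apply: hl; lia.
  - move=> s st; rewrite ifF; last by apply/eqP; lia.
    case: eqP => [e|ne]; last by apply: hc; lia.
    by move: hif; rewrite -e => -[].
  - rewrite eqxx; split => //; case: t {IH hpa ha hl hc} hif => [|t] hif //=.
    by case: hif.
move=> [c [acts [hq hl hc [hb ha]]]].
exists (acts t); split; [exact: hl | | by []].
apply/IH; exists c, acts; split => //.
- by move=> s st; apply: hl; lia.
- by move=> s st; apply: hc; lia.
- by case: t {IH} hl hc ha => //= t hl hc ha; split => //; apply: hc.
Qed.

Lemma decomposedE S C :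
  decomposed S C <-> exists2 p : cstate P, p (m k) = S (m k) & chain_quo S p C k [::].
Proof.
have [k' ek] : exists k', k = k'.+1 by exists k.-1; lia.
split.
  move=> [p [c [acts [hq runs ak chain hc]]]].
  exists p; first by have := runs (m k); rewrite ak.
  apply/chain_quoP; exists c, (fun s => acts (m s)); split => //.
  - by move=> s sk; apply: chain; lia.
  - by rewrite ek; split => //; rewrite chain ?ek // -ek ak.
move=> [p pk /chain_quoP [c [acts [hq hl hc]]]].
have [idx idxP] := all_sig (fun j => cid2 (m_surj j)).
have idx_m s : s <= k -> idx (m s) = s by move=> sk; have [h1 h2] := idxP (m s); apply: m_inj.
rewrite ek => -[hb hlast].
pose acts_n j := if j == m k then [::] else acts (idx j).
have an t : t < k -> acts_n (m t) = acts t.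
  by move=> tk; rewrite /acts_n ifF ?idx_m //; [lia | apply/negbTE/m_neq; lia].
exists p, c, acts_n; split => //; last by rewrite an.
- move=> j; rewrite /acts_n; case: eqP => [->|ne]; first by rewrite pk.
  have [ik mi] := idxP j; have := hl (idx j); rewrite mi; apply.
  by rewrite ltn_neqAle ik andbT; apply/eqP => e; apply: ne; rewrite -mi e.
- by rewrite /acts_n eqxx.
- move=> t tk; rewrite an //.
  case: (eqVneq t k') => [->|ne]; first by rewrite -ek /acts_n eqxx hlast.
  by rewrite an ?hc //; lia.
Qed.

Hypothesis Qset_regular : forall p, regular (@Qset P beta p).

Let of_ffun (i : {dffun forall j : node P, st j}) : cstate P := fun j => i j.

Lemma of_ffunK p : of_ffun [ffun j => p j] = p.
Proof. by apply: functional_extensionality_dep => j; rewrite /of_ffun ffunE. Qed.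

Lemma fin_regular_chain_quo S t : fin_regular (fun L => exists p C, L = chain_quo S p C t).
Proof.
elim: t => [|t IH].
  apply: (fin_regular_sub (fin_regular_rquo (fin_regular_range
    (fun i => regular_tagw (Qset_regular (of_ffun i)))))) => _ [p [C ->]].
  by exists (Qtag p), (tagw (C beta)); split => //; exists [ffun j => p j]; rewrite of_ffunK.
have rV (i : {dffun forall j, st j}) L : regular L -> regular (run_lang S (of_ffun i) t L).
  exact: regular_lrun.
apply: (fin_regular_sub (fin_regular_rquo (fin_regular_map rV IH))) => _ [p [C ->]].
exists (run_lang S p t (chain_quo S p C t)), (tagw (C (ch t))); split => //.
by exists [ffun j => p j], (chain_quo S p C t); rewrite of_ffunK; split => //; exists p, C.
Qed.

Lemma chain_quo_classifier S : exists (T : finType) (g : seq tmsg -> T),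
  (forall x, regular (fun w => g w = x)) /\
  forall C C', (forall e, g (tagw (C e)) = g (tagw (C' e))) ->
    forall p, chain_quo S p C k = chain_quo S p C' k.
Proof.
pose runs_upto n L := exists t p C, t < n /\ L = run_lang S p t (chain_quo S p C t).
have fin_runs n : fin_regular (runs_upto n).
  elim: n => [|n IH]; first by apply: (fin_regular_sub (fin_regular0 _)) => L [t [p [C []]]].
  have rV (i : {dffun forall j, st j}) L : regular L -> regular (run_lang S (of_ffun i) n L).
    exact: regular_lrun.
  apply: (fin_regular_sub (fin_regularU IH (fin_regular_map rV (fin_regular_chain_quo S n)))).
  move=> _ [t [p [C [tn ->]]]]; have [tn'|->] : t < n \/ t = n by lia.
    by left; exists t, p, C.
  by right; exists [ffun j => p j], (chain_quo S p C n); rewrite of_ffunK; split => //; exists p, C.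
have fin_Q : fin_regular (fun L => exists p, L = Qtag p).
  apply: (fin_regular_sub (fin_regular_range (fun i => regular_tagw (Qset_regular (of_ffun i))))).
  by move=> _ [p ->]; exists [ffun j => p j]; rewrite of_ffunK.
have [T [g [rg hg]]] := fin_regular_classifier (fin_regularU fin_Q (fin_runs k)).
exists T, g; split => // C C' hCC p.
suff chain_eq t : t <= k -> chain_quo S p C t = chain_quo S p C' t by apply: chain_eq.
elim: t => [_|t IH tk] /=; first by apply: hg (hCC beta) _ _; left; exists p.
rewrite IH; last by lia.
by apply: hg (hCC (ch t)) _ _; right; exists t, p, C'.
Qed.

Lemma recognizable_Lang_cycle S : recognizable (@Lang P S).
Proof.
have [T [g [rg hg]]] := chain_quo_classifier S.
apply: (@recognizable_saturated _ _ _ (fun e x => g (tagw x))) => [e t|C C' hCC].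
  exact: regular_preim_map (rg t).
rewrite !Lang_decomposed !decomposedE => -[p pk hp].
by exists p; rewrite // -(hg _ _ hCC).
Qed.

End Cycle.
End Protocol.

Record cycle_enum (P : cfsm) (beta : edge P) := CycleEnum {
  cyc_len : nat;
  cyc_node : nat -> node P;
  cyc_edge : nat -> edge P;
  cyc_edge_len : cyc_edge cyc_len = beta;
  cyc_tl : forall t, tl (cyc_edge t) = cyc_node t;
  cyc_hd : forall t, hd (cyc_edge t) = cyc_node t.+1;
  cyc_node_wrap : cyc_node cyc_len.+1 = cyc_node 0;
  cyc_node_inj : forall s t, s <= cyc_len -> t <= cyc_len -> cyc_node s = cyc_node t -> s = t;
  cyc_node_surj : forall j, exists2 t, t <= cyc_len & cyc_node t = j;
  cyc_edge_surj : forall e, exists2 t, t <= cyc_len & cyc_edge t = e }.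

(* Enumerate the cycle starting right after [beta], so that [beta] comes last. *)
Lemma cyclic_enum (P : cfsm) (beta : edge P) : cyclic P -> inhabited (cycle_enum beta).
Proof.
move=> [k [v [w [[vi vK viK] [[wi wK wiK] hvw]]]]].
pose rot t : 'I_k.+1 := inord ((wi beta + 1 + t) %% k.+1).
have rotE t : nat_of_ord (rot t) = (wi beta + 1 + t) %% k.+1.
  by rewrite inordK // ltn_pmod.
have rot_surj i : exists2 t, t <= k & rot t = i.
  exists ((i + k * (wi beta).+1) %% k.+1); first by rewrite -ltnS ltn_pmod.
  apply: val_inj; rewrite /= rotE modnDmr.
  have -> : wi beta + 1 + (i + k * (wi beta).+1) = (wi beta).+1 * k.+1 + i.
    by rewrite mulnS; lia.
  by rewrite modnMDl modn_small.
constructor; exists k (fun t => v (rot t)) (fun t => w (rot t)).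
- have -> : rot k = wi beta.
    apply: val_inj; rewrite /= rotE (_ : _ + 1 + k = wi beta + k.+1); last by lia.
    by rewrite modnDr modn_small.
  exact: wiK.
- by move=> t; case: (hvw (rot t)).
- move=> t; case: (hvw (rot t)) => _ ->; congr v; apply: val_inj.
  by rewrite /= rotE -addn1 modnDml rotE; congr (_ %% _); lia.
- congr v; apply: val_inj; rewrite /= !rotE (_ : _ + 1 + k.+1 = wi beta + 1 + 0 + k.+1).
    by rewrite modnDr.
  by lia.
- move=> s t sk tk /(can_inj vK) /(congr1 val); rewrite /= !rotE.
  by move/eqP; rewrite eqn_modDl !modn_small ?ltnS // => /eqP.
- by move=> j; have [t tk et] := rot_surj (vi j); exists t; rewrite // et viK.
- by move=> e; have [t tk et] := rot_surj (wi e); exists t; rewrite // et wiK.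
Qed.

Lemma recognizable_of_Qset_regular (P : cfsm) (beta : edge P) : cyclic P ->
  (forall S, regular (@Qset P beta S)) -> recognizable_channel_property P.
Proof.
move=> /(cyclic_enum beta) [[k m ch ch_k tl_ch hd_ch m_wrap m_inj m_surj ch_surj]] HQ S.
have [k0|k_gt0] := posnP k; last first.
  exact: (@recognizable_Lang_cycle P beta k m ch k_gt0 ch_k tl_ch hd_ch m_wrap m_inj
    m_surj ch_surj HQ S).
have all_beta e : e = beta by have [t] := ch_surj e; rewrite -ch_k k0 leqn0 => /eqP -> <-.
exists 1, (fun _ e x => exists2 C, Lang S C & C e = x); split.
  move=> _ e; have ee := all_beta e; subst e; apply: regular_ext (HQ S) => x.
  split=> [[C [hC [eC _]]]|[C hC eC]]; first by exists C.
  exists C; split => //; split => // xi; by rewrite (all_beta xi) eqxx.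
move=> C; split => [hC|[_ h]]; first by exists ord0 => e; exists C.
have [C' hC' eC'] := h beta; suff -> : C = C' by [].
by apply: functional_extensionality_dep => e; have ee := all_beta e; subst e.
Qed.

Theorem theorem8p3 (P : cfsm) (Hcyc : cyclic P) :
  [/\ (recognizable_channel_property P <-> rational_channel_property P),
      (rational_channel_property P <->
         (forall (beta : edge P) (S : cstate P), regular (@Qset P beta S))) &
      ((forall (beta : edge P) (S : cstate P), regular (@Qset P beta S)) <->
         (exists beta : edge P, forall S : cstate P, regular (@Qset P beta S)))].
Proof.
have a_b : recognizable_channel_property P -> rational_channel_property P.
  by move=> h S; apply/recognizable_rational/h.
have b_c : rational_channel_property P -> forall beta S, regular (@Qset P beta S).
  by move=> h beta S; apply/fin_residuals_regular/rational_slice/h.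
have c_d : (forall beta S, regular (@Qset P beta S)) ->
    exists beta, forall S, regular (@Qset P beta S).
  by have [k [v [w _]]] := Hcyc; move=> h; exists (w ord0).
have d_a : (exists beta, forall S, regular (@Qset P beta S)) ->
    recognizable_channel_property P.
  by move=> [beta]; apply: recognizable_of_Qset_regular.
by split; split; auto.
Qed.
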